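(* Let $N\geq1$, let $\mathbb{A}$ be a real antisymmetric $N\times N$ matrix, let $\gamma_1,\dots,\gamma_N\geq 0$ and $v_1,\dots,v_N\in\{-1,+1\}$, and let $\mathbb{L}=\mathbb{A}+\mathbb{D}$ with $\mathbb{D}=\mathrm{diag}(2\gamma_1v_1,\dots,2\gamma_Nv_N)$. Let $\mathfrak{V}=\{j: v_j=+1\}$ and $L_0=2\sum_{j\in\mathfrak{V}}\gamma_j$. Let $\lambda_1,\dots,\lambda_N$ be the eigenvalues of $\mathbb{L}$ (with multiplicity), ordered so that $\mathrm{Re}\,\lambda_1\geq\mathrm{Re}\,\lambda_2\geq\cdots\geq\mathrm{Re}\,\lambda_N$, and for $0\leq n\leq N$ set $\Delta_n=L_0-\sum_{k=1}^n\mathrm{Re}\,\lambda_k$. Then: (i) if $\mathfrak{V}\neq\emptyset$, $$\max\Big\{0,\;2\Big(\sum_{j\in\mathfrak{V}}\gamma_j-n\max_{j\in\mathfrak{V}}\gamma_j\Big)\Big\}\leq\Delta_n\leq 2\Big(\sum_{j\in\mathfrak{V}}\gamma_j+n\max_{1\le j\le N}\gamma_j\Big);$$ (ii) if $\mathfrak{V}=\emptyset$, $$2n\min_{1\le j\le N}\gamma_j\leq\Delta_n\leq 2n\max_{1\le j\le N}\gamma_j.$$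
   Context: $\mathbb{L}$ is the single-particle matrix of a fermion-number-conserving Lindbladian $\mathcal{L}=\sum_{ij}f_i^\dagger\mathbb{L}_{ij}f_j-L_0$, and $\Delta_n$ is the spectral gap (slowest decay rate) in the sector with $n$ adjoint fermions; $\mathfrak{V}$ is the set of sites with interlayer gauge flips. *)

From HB Require Import structures.
From mathcomp Require Import all_boot all_order all_algebra.
From mathcomp Require Import complex.
Set Implicit Arguments. Unset Strict Implicit. Unset Printing Implicit Defensive.
Import Order.TTheory GRing.Theory Num.Theory.
Local Open Scope ring_scope.

Definition Lmat (R : rcfType) (N : nat) (A : 'M[R]_N) (gamma v : 'I_N -> R)
  : 'M[R]_N := A + diag_mx (\row_j (2 * gamma j * v j)).

Definition Vset (R : rcfType) (N : nat) (v : 'I_N -> R) : {set 'I_N} :=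
  [set j | v j == 1].

Definition L0 (R : rcfType) (N : nat) (gamma v : 'I_N -> R) : R :=
  2 * \sum_(j in Vset v) gamma j.

Definition eigen_list (R : rcfType) (N : nat) (M : 'M[R]_N)
  (lam : 'I_N -> R[i]) : Prop :=
  char_poly (map_mx (real_complex R) M) = \prod_(k < N) ('X - (lam k)%:P).

Definition Re_sorted (R : rcfType) (N : nat) (lam : 'I_N -> R[i]) : Prop :=
  forall i j : 'I_N, (i <= j)%N -> complex.Re (lam j) <= complex.Re (lam i).

Definition Delta (R : rcfType) (N : nat) (gamma v : 'I_N -> R)
  (lam : 'I_N -> R[i]) (n : nat) : R :=
  L0 gamma v - \sum_(k < N | (k < n)%N) complex.Re (lam k).

From HB Require Import structures.
From mathcomp Require Import all_boot all_order all_algebra.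
From mathcomp Require Import complex.
From mathcomp Require Import perm ring lra.
Set Implicit Arguments. Unset Strict Implicit. Unset Printing Implicit Defensive.
Import Order.TTheory GRing.Theory Num.Theory.
Local Open Scope ring_scope.

(* By Schur's theorem, the complexified L is unitarily triangularizable,
   T = P L P^H, and the diagonal of T lists the eigenvalues.  Since A is real
   antisymmetric, Re (p A p^H) = 0 for every complex row p, hence
   Re T_kk = sum_j |P_kj|^2 d_j with d_j = 2 gamma_j v_j.  The matrix
   (|P_kj|^2) is doubly stochastic, so the real parts of any n eigenvalues
   add up to sum_j w_j d_j with weights 0 <= w_j <= 1 of total mass n; the
   bounds follow from d_j = 2 gamma_j on V and d_j = -2 gamma_j off V. *)

Lemma char_poly_conjmx (F : fieldType) n (V f : 'M[F]_n) : V \in unitmx ->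
  char_poly (V *m f *m invmx V) = char_poly f.
Proof.
move=> Vu; rewrite /char_poly /char_poly_mx.
set V' := map_mx polyC V; set W' := map_mx polyC (invmx V).
have VW : V' *m W' = 1%:M by rewrite -map_mxM mulmxV // map_mx1.
have -> : 'X%:M - map_mx polyC (V *m f *m invmx V) =
          V' *m ('X%:M - map_mx polyC f) *m W'.
  rewrite !map_mxM mulmxBr mulmxBl mul_mx_scalar -scalemxAl VW scalemx1.
  by rewrite -!mulmxA.
by rewrite !det_mulmx mulrAC -det_mulmx VW det1 mul1r.
Qed.

Local Open Scope sesquilinear_scope.

Lemma eigenvalues_unitary_diag (C : numClosedFieldType) n (M : 'M[C]_n)
    (lam : 'I_n -> C) : (0 < n)%N ->
  char_poly M = \prod_(k < n) ('X - (lam k)%:P) ->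
  exists2 P, P \is unitarymx &
    exists s : 'S_n, forall k, lam k = (P *m M *m P^t*) (s k) (s k).
Proof.
move=> n_gt0 charM; have [P Pu Ptrig] := Schur M n_gt0.
exists P => //; rewrite -conjymx //.
have : char_poly (conjmx P M) = char_poly M.
  by rewrite conjumx ?unitarymx_unit ?char_poly_conjmx ?unitarymx_unit.
rewrite (char_poly_trig Ptrig) charM => eq_char.
have /tuple_permP[s eq_diag] :
    perm_eq [tuple lam k | k < n] [tuple conjmx P M i i | i < n].
  apply: prod_XsubC_eq; rewrite !big_tuple.
  by under eq_bigr do rewrite tnth_mktuple; under [RHS]eq_bigr do rewrite tnth_mktuple.
exists s => k; have := congr1 (fun t => tnth t k) (val_inj eq_diag).
by rewrite /= !tnth_mktuple.
Qed.

Section DoublyStochastic.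
Variable R : realDomainType.

Definition doubly_stochastic n (S : 'M[R]_n) :=
  [/\ forall i j, 0 <= S i j, forall i, \sum_j S i j = 1
    & forall j, \sum_i S i j = 1].

Lemma doubly_stochastic_row_perm n (S : 'M[R]_n) (s : 'S_n) :
  doubly_stochastic S -> doubly_stochastic (row_perm s S).
Proof.
case=> S_ge0 S_row S_col; split=> [i j | i | j]; rewrite ?mxE //.
  by under eq_bigr do rewrite mxE.
under eq_bigr do rewrite mxE.
by rewrite -(S_col j) [RHS](reindex_perm s).
Qed.

Lemma doubly_stochastic_partial_col_sum n (S : 'M[R]_n) (K : pred 'I_n) j :
  doubly_stochastic S -> 0 <= \sum_(k | K k) S k j <= 1.
Proof.
case=> S_ge0 _ S_col; rewrite sumr_ge0 //= -(S_col j).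
by rewrite [leRHS](bigID K) lerDl sumr_ge0.
Qed.

Lemma doubly_stochastic_partial_sum n (S : 'M[R]_n) (K : pred 'I_n) :
  doubly_stochastic S -> \sum_j \sum_(k | K k) S k j = #|K|%:R.
Proof.
case=> _ S_row _; rewrite exchange_big /= -sum1_card natr_sum.
by apply: eq_bigr => k _; rewrite S_row.
Qed.

End DoublyStochastic.

Section ComplexForms.
Variable R : rcfType.
Implicit Types z w : R[i].

Lemma Re_sum (I : Type) (r : seq I) (P : pred I) (F : I -> R[i]) :
  complex.Re (\sum_(i <- r | P i) F i) = \sum_(i <- r | P i) complex.Re (F i).
Proof. exact: (raddf_sum (@complex.Re R : Rcomplex R -> R)). Qed.

Lemma ReD z w : complex.Re (z + w) = complex.Re z + complex.Re w.
Proof. exact: (raddfD (@complex.Re R : Rcomplex R -> R)). Qed.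

Lemma Re_mul_conj_ge0 z : 0 <= complex.Re (z * z^*).
Proof. by have := mul_conjC_ge0 z; rewrite lecE => /andP[]. Qed.

Lemma Re_mul_conjC z w : complex.Re (z * w^*) = complex.Re (w * z^*).
Proof. by case: z => a b; case: w => c e /=; ring. Qed.

Lemma Re_mul_realC z x w : complex.Re (z * (x%:C)%C * w) = x * complex.Re (z * w).
Proof. by case: z => a b; case: w => c e /=; ring. Qed.

Lemma Re_conj_realmx_entry m n (P : 'M[R[i]]_(m, n)) (B : 'M[R]_n) i :
  complex.Re ((P *m map_mx (real_complex R) B *m P^t*) i i)
  = \sum_a \sum_b B a b * complex.Re (P i a * (P i b)^*).
Proof.
rewrite mxE Re_sum exchange_big /=; apply: eq_bigr => b _.
rewrite !mxE mulr_suml Re_sum; apply: eq_bigr => a _.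
by rewrite !mxE Re_mul_realC.
Qed.

Lemma Re_conj_antisymmx_entry m n (P : 'M[R[i]]_(m, n)) (A : 'M[R]_n) i :
  A^T = - A -> complex.Re ((P *m map_mx (real_complex R) A *m P^t*) i i) = 0.
Proof.
move=> antiA; rewrite Re_conj_realmx_entry; set S := (X in X = 0).
suff : S = - S by lra.
rewrite {2}/S exchange_big /= -sumrN; apply: eq_bigr => a _.
rewrite -sumrN; apply: eq_bigr => b _.
have -> : A a b = - A b a.
  by have := congr1 (fun M : 'M[R]_n => M b a) antiA; rewrite !mxE.
by rewrite Re_mul_conjC mulNr.
Qed.

Lemma Re_conj_diagmx_entry m n (P : 'M[R[i]]_(m, n)) (d : 'rV[R]_n) i :
  complex.Re ((P *m map_mx (real_complex R) (diag_mx d) *m P^t*) i i)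
  = \sum_a d 0 a * complex.Re (P i a * (P i a)^*).
Proof.
rewrite Re_conj_realmx_entry; apply: eq_bigr => a _.
rewrite (bigD1 a) //= big1 ?addr0 => [|b /negbTE nab]; rewrite mxE.
  by rewrite eqxx mulr1n.
by rewrite eq_sym nab mulr0n mul0r.
Qed.

Lemma unitarymx_sqnorm_doubly_stochastic n (P : 'M[R[i]]_n) :
  P \is unitarymx ->
  doubly_stochastic (\matrix_(i, j) complex.Re (P i j * (P i j)^*)).
Proof.
move=> /unitarymxP PPt; split=> [i j | i | j]; rewrite ?mxE ?Re_mul_conj_ge0 //.
  have -> : 1 = complex.Re ((P *m P^t*) i i) by rewrite PPt mxE eqxx.
  by rewrite mxE Re_sum; apply: eq_bigr => j _; rewrite !mxE.
have -> : 1 = complex.Re ((P^t* *m P) j j) by rewrite (mulmx1C PPt) mxE eqxx.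
by rewrite mxE Re_sum; apply: eq_bigr => i _; rewrite !mxE mulrC.
Qed.

End ComplexForms.

Lemma Re_eigen_doubly_stochastic (R : rcfType) n (A : 'M[R]_n) (d : 'rV[R]_n)
    (lam : 'I_n -> R[i]) :
  (0 < n)%N -> A^T = - A -> eigen_list (A + diag_mx d) lam ->
  exists2 S : 'M[R]_n, doubly_stochastic S &
    forall k, complex.Re (lam k) = \sum_j S k j * d 0 j.
Proof.
move=> n_gt0 antiA /(eigenvalues_unitary_diag n_gt0)[P Pu [s lamE]].
exists (row_perm s (\matrix_(i, j) complex.Re (P i j * (P i j)^*))).
  exact/doubly_stochastic_row_perm/unitarymx_sqnorm_doubly_stochastic.
move=> k; rewrite lamE map_mxD mulmxDr mulmxDl mxE ReD.
rewrite Re_conj_antisymmx_entry // add0r Re_conj_diagmx_entry.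
by apply: eq_bigr => j _; rewrite !mxE mulrC.
Qed.

Lemma sum_Re_eigen_weights (R : rcfType) n (A : 'M[R]_n) (d : 'I_n -> R)
    (lam : 'I_n -> R[i]) (K : pred 'I_n) :
  (0 < n)%N -> A^T = - A -> eigen_list (A + diag_mx (\row_j d j)) lam ->
  exists w : 'I_n -> R, [/\ forall j, 0 <= w j <= 1, \sum_j w j = #|K|%:R
    & \sum_(k | K k) complex.Re (lam k) = \sum_j d j * w j].
Proof.
move=> n_gt0 antiA /(Re_eigen_doubly_stochastic n_gt0 antiA)[S Sds ReS].
exists (fun j => \sum_(k | K k) S k j); split.
- by move=> j; apply: doubly_stochastic_partial_col_sum.
- exact: doubly_stochastic_partial_sum.
under eq_bigr do rewrite ReS; rewrite exchange_big /=.
by apply: eq_bigr => j _; rewrite mulr_sumr; under eq_bigr do rewrite mxE mulrC.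
Qed.

Section WeightedSums.
Variables (R : realDomainType) (I : finType).
Implicit Types d w : I -> R.

Lemma weighted_sum_bounds d w a b :
  (forall j, 0 <= w j) -> (forall j, a <= d j <= b) ->
  a * \sum_j w j <= \sum_j d j * w j <= b * \sum_j w j.
Proof.
move=> w_ge0 d_ab; rewrite !mulr_sumr.
by apply/andP; split; apply: ler_sum => j _; have /andP[da db] := d_ab j;
  apply: ler_wpM2r.
Qed.

Lemma weighted_sum_le_support (V : pred I) d w :
  (forall j, 0 <= w j <= 1) -> (forall j, V j -> 0 <= d j) ->
  (forall j, ~~ V j -> d j <= 0) -> \sum_j d j * w j <= \sum_(j | V j) d j.
Proof.
move=> w01 dV dVc; rewrite (bigID V) /= -[leRHS]addr0.
have /all_and2[w_ge0 w_le1] := fun j => andP (w01 j).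
apply: lerD; first by apply: ler_sum => j Vj; apply: ler_piMr; rewrite ?dV.
by apply: sumr_le0 => j Vcj; apply: mulr_le0_ge0; rewrite ?dVc.
Qed.

End WeightedSums.

Lemma card_ord_lt n N : (n <= N)%N -> #|[pred k : 'I_N | (k < n)%N]| = n.
Proof.
move=> le_nN; rewrite -sum1_card -(big_ord_widen N (fun _ => 1%N) le_nN).
by rewrite sum1_card card_ord.
Qed.

Section GaugeWeightedSums.
Variables (R : realDomainType) (I : finType) (gamma v w : I -> R) (n : nat).
Hypotheses (gamma_ge0 : forall j, 0 <= gamma j)
  (v_sign : forall j, v j = 1 \/ v j = -1)
  (w01 : forall j, 0 <= w j <= 1) (sum_w : \sum_j w j = n%:R).

Let V := [set j | v j == 1].
Let S := \sum_j 2 * gamma j * v j * w j.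
Let m := \big[Num.max/0]_j gamma j.

Let w_ge0 j : 0 <= w j. Proof. by case/andP: (w01 j). Qed.
Let le_m j : gamma j <= m. Proof. exact: le_bigmax. Qed.

Let d_in j : j \in V -> 2 * gamma j * v j = 2 * gamma j.
Proof. by rewrite inE => /eqP ->; rewrite mulr1. Qed.

Let d_out j : j \notin V -> 2 * gamma j * v j = - (2 * gamma j).
Proof. by rewrite inE; case: (v_sign j) => ->; rewrite ?eqxx // mulrN1. Qed.

Lemma flip_weighted_sum_bounds :
  Num.max 0 (2 * (\sum_(j in V) gamma j - n%:R * \big[Num.max/0]_(j in V) gamma j))
    <= 2 * \sum_(j in V) gamma j - S
  /\ 2 * \sum_(j in V) gamma j - S <= 2 * (\sum_(j in V) gamma j + n%:R * m).
Proof.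
set G := \sum_(j in V) gamma j; set mV := \big[Num.max/0]_(j in V) gamma j.
have mV_ge0 : 0 <= mV by apply: bigmax_ge_id.
have le_mV j : j \in V -> gamma j <= mV by move=> Vj; apply: le_bigmax_cond.
have d_bounds j : - (2 * m) <= 2 * gamma j * v j <= 2 * mV.
  have := gamma_ge0 j; have := le_m j; case: (boolP (j \in V)) => Vj.
    by have := le_mV j Vj; rewrite d_in // => *; apply/andP; split; lra.
  by rewrite d_out // => *; apply/andP; split; lra.
have /andP[S_lo S_hi] := weighted_sum_bounds w_ge0 d_bounds.
have S_le : S <= 2 * G.
  rewrite /G mulr_sumr -(eq_bigr _ d_in).
  apply: weighted_sum_le_support => // j Vj.
    by rewrite d_in //; have := gamma_ge0 j; lra.
  by rewrite d_out //; have := gamma_ge0 j; lra.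
rewrite -/S sum_w in S_lo S_hi; rewrite ge_max.
by split; [apply/andP; split|]; lra.
Qed.

Lemma no_flip_weighted_sum_bounds j0 : V = set0 ->
  2 * n%:R * \big[Num.min/gamma j0]_j gamma j <= 2 * \sum_(j in V) gamma j - S
  /\ 2 * \sum_(j in V) gamma j - S <= 2 * n%:R * m.
Proof.
move=> V0; set mu := \big[Num.min/gamma j0]_j gamma j.
have d_bounds j : - (2 * m) <= 2 * gamma j * v j <= - (2 * mu).
  have le_mu : mu <= gamma j by apply: bigmin_le.
  have := le_m j; rewrite d_out ?V0 ?inE // => *.
  by apply/andP; split; lra.
have /andP[S_lo S_hi] := weighted_sum_bounds w_ge0 d_bounds.
rewrite -/S sum_w in S_lo S_hi; rewrite V0 big_set0 mulr0 sub0r.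
by split; lra.
Qed.

End GaugeWeightedSums.

Theorem mainTheorem2 (R : rcfType) (N : nat) (hN : (0 < N)%N)
  (A : 'M[R]_N) (gamma v : 'I_N -> R)
  (hA : A^T = - A)
  (hgamma : forall j, 0 <= gamma j)
  (hv : forall j, v j = 1 \/ v j = -1)
  (lam : 'I_N -> R[i])
  (hlam : eigen_list (Lmat A gamma v) lam)
  (hsort : Re_sorted lam)
  (n : nat) (hn : (n <= N)%N) :
  (Vset v != set0 ->
     Num.max 0 (2 * (\sum_(j in Vset v) gamma j
                     - n%:R * \big[Num.max/0]_(j in Vset v) gamma j))
       <= Delta gamma v lam n
     /\ Delta gamma v lam n
       <= 2 * (\sum_(j in Vset v) gamma j + n%:R * \big[Num.max/0]_(j < N) gamma j))
  /\
  (Vset v = set0 ->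
     2 * n%:R * \big[Num.min/gamma (Ordinal hN)]_(j < N) gamma j <= Delta gamma v lam n
     /\ Delta gamma v lam n <= 2 * n%:R * \big[Num.max/0]_(j < N) gamma j).
Proof.
have [w [w01 sum_w sumRe]] :=
  sum_Re_eigen_weights [pred k : 'I_N | (k < n)%N] hN hA hlam.
rewrite card_ord_lt // in sum_w; rewrite /Delta /L0 sumRe.
split=> [_ | V0].
  exact: flip_weighted_sum_bounds.
exact: no_flip_weighted_sum_bounds.
Qed.
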